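(* Let $S$ be a finite $p$-group for an odd prime $p$. If every subgroup $L$ of $S$ with $\mathfrak{X}(S)\leq L\leq J(S)\mathfrak{X}(S)$ is normal in $S$, then $J(S)\leq \mathfrak{X}(S)$.
   Context: For a finite $p$-group $G$ and subgroups $A,B$, write $[A,B;1]=[A,B]$ and $[A,B;k]=[[A,B;k-1],B]$. $\Omega_1(G)$ denotes the subgroup generated by the elements of order $p$ in $G$. The Oliver subgroup $\mathfrak{X}(G)$ of a finite $p$-group $G$ is the unique largest normal subgroup $K$ of $G$ admitting a chain $1=Q_0\leq Q_1\leq\cdots\leq Q_n=K$ of normal subgroups $Q_i\unlhd G$ such that $[\Omega_1(C_G(Q_{i-1})),Q_i;p-1]=1$ for each $1\leq i\leq n$. $J(S)$ is the Thompson subgroup of $S$: the subgroup generated by all elementary abelian $p$-subgroups of $S$ whose rank equals the $p$-rank of $S$ (the largest rank of an elementary abelian $p$-subgroup of $S$). *)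

From mathcomp Require Import all_boot all_fingroup all_solvable.
Set Implicit Arguments. Unset Strict Implicit. Unset Printing Implicit Defensive.
Local Open Scope group_scope.

Section Defs.
Variable gT : finGroupType.

Definition omega1 (p : nat) (A : {set gT}) : {set gT} :=
  <<[set x in A | #[x] == p]>>.

Fixpoint itcomm (A B : {set gT}) (k : nat) : {set gT} :=
  match k with
  | 0 => A
  | k'.+1 => [~: itcomm A B k', B]
  end.

Definition thompson (p : nat) (S : {set gT}) : {set gT} :=
  <<\bigcup_(E in 'E_p^('r_p(S))(S)) E>>.

Definition oliver_chain (p : nat) (S K : {group gT}) : Prop :=
  exists (n : nat) (Q : nat -> {group gT}),
    [/\ Q 0 = 1 :> {set gT}, Q n = K :> {set gT},
        (forall i, i <= n -> Q i <| S),
        (forall i, 0 < i <= n -> Q i.-1 \subset Q i) &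
        (forall i, 0 < i <= n ->
           itcomm (omega1 p 'C_S(Q i.-1)) (Q i) p.-1 = 1)].

Definition is_oliver (p : nat) (S X : {group gT}) : Prop :=
  [/\ X <| S, oliver_chain p S X &
      forall K : {group gT}, K <| S -> oliver_chain p S K -> K \subset X].

End Defs.

From mathcomp Require Import all_boot all_fingroup all_solvable.
Set Implicit Arguments. Unset Strict Implicit. Unset Printing Implicit Defensive.
Local Open Scope group_scope.

(* Let W = Omega_1(C_S(X)). A normal subgroup Q >= X of S with [W, Q, Q] = 1 can
   be appended to an Oliver chain of X (p >= 3 gives p - 1 >= 2), so Q <= X.
   Taking for Q the preimage of a central subgroup of S/X inside C_S(X)X/X
   shows C_S(X) <= X, hence W is elementary abelian, normal in S and
   centralised by X. If J(S) is not contained in X, Thompson replacement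
   (among the elementary abelian subgroups of maximal rank not centralising W,
   one meeting W maximally acts quadratically on W) gives e in J(S) \ X with
   [W, e, e] = 1. By hypothesis Q = X<e> is normal in S, and [W, Q, Q] = 1,
   so e is in Q <= X: a contradiction. *)

Section GroupLemmas.
Variable gT : finGroupType.
Implicit Types (A B : {set gT}) (G H K : {group gT}) (w e : gT).

Lemma itcomm_quadratic A B k : [~: [~: A, B], B] = 1 -> 1 < k -> itcomm A B k = 1.
Proof.
move=> AB2 k_gt1; rewrite -(subnKC k_gt1).
by elim: (k - 2) => [|m /= ->] //; rewrite comm1G.
Qed.

Lemma itcomm_subW H K k : K \subset 'N(H) -> itcomm H K k \subset H.
Proof.
move=> nHK; elim: k => [|k IHk] //=.
by apply: subset_trans (commSg _ IHk) _; rewrite commg_subl.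
Qed.

Lemma itcomm_sub_lcn G H K k :
  H \subset G -> K \subset G -> itcomm H K k \subset 'L_k.+1(G).
Proof.
move=> sHG sKG; elim: k => [|k IHk] /=; first by rewrite lcn1.
by rewrite lcnSn commgSS.
Qed.

Lemma omega1_Ohm1 p G : prime p -> p.-group G -> omega1 p G = 'Ohm_1(G).
Proof.
move=> p_pr pG; rewrite Ohm1Eprime /omega1; congr <<_>>.
apply/setP=> x; rewrite !inE; apply: andb_id2l => Gx.
apply/eqP/idP=> [-> // | x_pr].
by apply/eqP; have := mem_p_elt pG Gx; rewrite /p_elt (pnatE _ x_pr).
Qed.

Lemma abelemY p G H :
  p.-abelem G -> p.-abelem H -> H \subset 'C(G) -> p.-abelem (G <*> H).
Proof. by move=> abelG abelH cGH; rewrite (cprod_abelem p (cprodEY cGH)) abelG. Qed.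

Lemma commute_commgX w e i : commute [~ w, e] e -> commute [~ w, e ^+ i] e.
Proof.
move=> we_e; elim: i => [|i IHi]; first by rewrite commg1; apply/commute_sym/commute1.
rewrite expgSr commgMJ; have /commgP/conjg_fixP-> := IHi.
by apply/commute_sym/commuteM; apply/commute_sym.
Qed.

Lemma normal_subcent G H : H <| G -> 'C_G(H) <| G.
Proof. by case/andP=> _ nHG; have := subcent_normal G H; rewrite (setIidPl nHG). Qed.

Lemma subcent_quadratic G H K :
    H <| G -> K \subset G -> K \subset H * 'C_G(H) -> [~: 'C_G(H), K] \subset H ->
  [~: [~: 'C_G(H), K], K] = 1.
Proof.
move=> nsHG sKG sK_HC sCK_H; have nCG := normal_norm (normal_subcent nsHG).
have sCK_CH : [~: 'C_G(H), K] \subset 'C_G(H) :&: H.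
  by rewrite subsetI sCK_H commg_subl (subset_trans sKG).
apply/commG1P; rewrite centsC (subset_trans sK_HC) //.
rewrite (subset_trans _ (centS sCK_CH)) //.
rewrite mul_subG //; first by rewrite centsC subIset ?subsetIr.
exact: subset_trans (subsetIr G 'C(H)) (centS (subsetIr _ _)).
Qed.

Lemma cents_Ohm1_subcent G H : H \subset 'C('Ohm_1('C_G(H))).
Proof. by rewrite centsC (subset_trans (Ohm_sub 1 _)) ?subsetIr. Qed.

Lemma quadratic_join_cycle (W X : {group gT}) e :
    W \subset 'C(X) -> e \in 'N(W) -> e \in 'N(X) ->
    (forall w, w \in W -> [~ w, e, e] = 1) ->
  [~: [~: W, X <*> <[e]>], X <*> <[e]>] = 1.
Proof.
move=> cXW nWe nXe quad_e; have nXE : <[e]> \subset 'N(X) by rewrite cycle_subG.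
apply/commG1P; rewrite gen_subG /= centY cent_cycle norm_joinEr //.
apply/subsetP=> _ /imset2P[w _ Ww /mulsgP[y _ Xy /cycleP[i ->] ->] ->].
have /commgP/eqP wy1 : commute w y := centP (subsetP cXW w Ww) y Xy.
rewrite commgMJ wy1 conj1g mulg1.
rewrite inE (subsetP cXW) /=.
  by apply/cent1P/commute_commgX/commgP; rewrite quad_e.
have: [~ w, e ^+ i] \in [~: W, <[e]>] by rewrite mem_commg ?mem_cycle.
by apply/subsetP; rewrite commg_subl cycle_subG.
Qed.

(* Take x in [W, B; k] for the largest k for which some [x, a, b] is
   nontrivial; k is bounded since [W, B; k] <= L_(k+1)(G). *)
Lemma exists_cubic_commg G (W B : {group gT}) w0 a0 b0 :
    nilpotent G -> W \subset G -> B \subset G -> B \subset 'N(W) ->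
    w0 \in W -> a0 \in B -> b0 \in B -> [~ w0, a0, b0] != 1 ->
  exists x a b, [/\ x \in W, a \in B, b \in B, [~ x, a, b] != 1 &
    forall a b c, a \in B -> b \in B -> c \in B -> [~ x, a, b, c] = 1].
Proof.
move=> /lcnP[n Ln1] sWG sBG nWB Ww0 Ba0 Bb0 nt_w0.
pose P k := [exists x, [exists a, [exists b,
  [&& x \in itcomm W B k, a \in B, b \in B & [~ x, a, b] != 1]]]].
have P0 : P 0.
  apply/existsP; exists w0; apply/existsP; exists a0; apply/existsP; exists b0.
  exact/and4P.
have P_bound k : P k -> k <= n.
  case/existsP=> x /existsP[a1 /existsP[b1 /and4P[x_k _ _]]]; apply: contraR.
  rewrite -ltnNge => lt_n_k; have: itcomm W B k \subset [1 gT].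
    rewrite -Ln1 (subset_trans (itcomm_sub_lcn k sWG sBG)) // lcn_sub_leq //.
    by rewrite ltnS ltnW.
  by move/subsetP/(_ x x_k)/set1P->; rewrite !comm1g.
have [k Pk maxk] := ex_maxnP (ex_intro P 0 P0) P_bound.
case/existsP: Pk => x /existsP[a1 /existsP[b1 /and4P[x_k Ba1 Bb1 nt_x]]].
exists x, a1, b1; split=> //; first exact: subsetP (itcomm_subW k nWB) x x_k.
move=> a2 b2 c2 Ba2 Bb2 Bc2; apply/eqP/idPn => nt_x2.
suff /maxk : P k.+1 by rewrite ltnn.
apply/existsP; exists [~ x, a2]; apply/existsP; exists b2; apply/existsP; exists c2.
by rewrite Bb2 Bc2 nt_x2 mem_commg.
Qed.

End GroupLemmas.

Section OliverSubgroup.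
Variables (gT : finGroupType) (p : nat) (S X : {group gT}).
Hypotheses (p_pr : prime p) (p_odd : odd p) (pS : p.-group S).
Hypothesis oliverX : is_oliver p S X.

Let nsXS : X <| S. Proof. by case: oliverX. Qed.

Let pC : p.-group 'C_S(X). Proof. exact: pgroupS (subsetIl _ _) pS. Qed.

Lemma oliver_sub_of_quadratic (Q : {group gT}) :
    Q <| S -> X \subset Q -> [~: [~: 'Ohm_1('C_S(X)), Q], Q] = 1 ->
  Q \subset X.
Proof.
rewrite -(omega1_Ohm1 p_pr pC) => nsQS sXQ quadQ.
case: oliverX => _ [n [Qs [Q0 Qn nsQsS sQs cQs]]] maxX.
apply: maxX => //; exists n.+1, (fun i => if i <= n then Qs i else Q).
have p1_gt1 : 1 < p.-1.
  by case: p p_pr p_odd => [|[|[|q]]].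
split=> [||i|i /andP[i_gt0 le_i_n1]|i /andP[i_gt0 le_i_n1]]; rewrite ?ltnn //.
- by case: ifP => // /nsQsS.
- rewrite -ltnS (ltn_predK i_gt0) le_i_n1; case: leqP => [le_i_n|lt_n_i].
    by apply: sQs; rewrite i_gt0.
  by rewrite (@anti_leq i n.+1) ?le_i_n1 //= Qn.
- rewrite -ltnS (ltn_predK i_gt0) le_i_n1; case: leqP => [le_i_n|lt_n_i].
    by apply: cQs; rewrite i_gt0.
  by rewrite (@anti_leq i n.+1) ?le_i_n1 //= Qn; apply: itcomm_quadratic.
Qed.

Lemma oliver_cent_sub : 'C_S(X) \subset X.
Proof.
have nXS := normal_norm nsXS; have nsCS := normal_subcent nsXS.
have nXC : 'C_S(X) \subset 'N(X) := subset_trans (subsetIl _ _) nXS.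
apply/idPn=> not_sCX.
have ntCX : 'C_S(X) / X != 1.
  by apply: contra not_sCX => /eqP CX1; rewrite -quotient_sub1 ?CX1.
have nilSX : nilpotent (S / X) := pgroup_nil (quotient_pgroup X pS).
have [y /setIP[CXy ZSy] nty] :=
  trivgPn _ (meet_center_nil nilSX (quotient_normal X nsCS) ntCX).
pose Q := (coset X @*^-1 <[y]>)%G.
have sYZ : <[y]> \subset 'Z(S / X) by rewrite cycle_subG.
have nsQS : Q <| S by rewrite -(quotientGK nsXS) cosetpre_normal sub_center_normal.
have sQS := normal_sub nsQS.
have sQ_XC : Q \subset X * 'C_S(X).
  by rewrite -quotientK // morphpreS // cycle_subG.
have sCQ_X : [~: 'C_S(X), Q] \subset X.
  rewrite -quotient_cents2 ?(subset_trans sQS) // cosetpreK centsC.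
  apply: subset_trans sYZ (subset_trans (subsetIr _ _) _).
  exact: centS (quotientS X (subsetIl _ _)).
have /negP[] : ~~ (Q \subset X).
  by rewrite -quotient_sub1 ?(subset_trans sQS) // cosetpreK cycle_subG inE.
apply: oliver_sub_of_quadratic => //; first exact: sub_cosetpre.
apply/trivgP; rewrite -(subcent_quadratic nsXS sQS sQ_XC sCQ_X).
exact: commSg _ (commSg _ (Ohm_sub 1 _)).
Qed.

Lemma abelem_Ohm1_subcent : p.-abelem 'Ohm_1('C_S(X)).
Proof.
apply: Ohm1_abelem pC _.
exact: subset_trans (subsetIr S _) (centS oliver_cent_sub).
Qed.

Lemma normal_Ohm1_subcent : 'Ohm_1('C_S(X)) <| S.
Proof. exact: char_normal_trans (Ohm_char 1 _) (normal_subcent nsXS). Qed.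

Lemma oliver_quadratic_mem e :
    e \in S -> X <*> <[e]> <| S ->
    (forall w, w \in 'Ohm_1('C_S(X)) -> [~ w, e, e] = 1) ->
  e \in X.
Proof.
move=> Se nsQS quad_e; have nWS := normal_norm normal_Ohm1_subcent.
suff sQX : X <*> <[e]> \subset X.
  by rewrite (subsetP sQX) // (subsetP (joing_subr X _)) ?cycle_id.
apply: oliver_sub_of_quadratic; rewrite ?joing_subl //.
apply: quadratic_join_cycle; rewrite ?(subsetP nWS) ?(subsetP (normal_norm nsXS)) //.
by rewrite centsC cents_Ohm1_subcent.
Qed.

End OliverSubgroup.

Section MaxRankElem.
Variables (gT : finGroupType) (p : nat) (S : {group gT}).
Hypothesis p_pr : prime p.

Lemma max_rank_cent_sub (B E : {group gT}) :
    B \in 'E_p^('r_p(S))(S) -> E \subset S -> p.-abelem E -> E \subset 'C(B) ->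
  E \subset B.
Proof.
case/pnElemP=> sBS abelB rB sES abelE cBE.
have abelEB : p.-abelem (E <*> B) by rewrite abelemY // centsC.
have leEB : logn p #|E <*> B| <= logn p #|B|.
  by rewrite rB logn_le_p_rank //; apply/pElemP; rewrite join_subG sES sBS.
have defB : B :=: E <*> B.
  apply/eqP; rewrite eqEcard joing_subr (card_pgroup (abelem_pgroup abelEB)).
  by rewrite (card_pgroup (abelem_pgroup abelB)) leq_exp2l ?prime_gt1.
by rewrite defB joing_subl.
Qed.

End MaxRankElem.

Section QuadraticReplacement.
Variables (gT : finGroupType) (p : nat) (S W B : {group gT}) (x : gT).
Hypotheses (p_pr : prime p) (abelW : p.-abelem W) (sWS : W \subset S).
Hypotheses (nWS : S \subset 'N(W)) (maxB : B \in 'E_p^('r_p(S))(S)).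
Hypotheses (Wx : x \in W)
  (cubic_x : forall a b c, a \in B -> b \in B -> c \in B -> [~ x, a, b, c] = 1).

Let sBS : B \subset S. Proof. by case/pnElemP: maxB. Qed.
Let abelB : p.-abelem B. Proof. by case/pnElemP: maxB. Qed.
Let nWB : B \subset 'N(W). Proof. exact: subset_trans sBS nWS. Qed.
Let cWW : abelian W. Proof. exact: abelem_abelian abelW. Qed.
Let cBB : abelian B. Proof. exact: abelem_abelian abelB. Qed.

Let Z := (W :&: B)%G.
Let sZW : Z \subset W. Proof. exact: subsetIl. Qed.
Let sZB : Z \subset B. Proof. exact: subsetIr. Qed.
Let nZW : W \subset 'N(Z).
Proof. exact: subset_trans cWW (subset_trans (centS sZW) (cent_sub Z)). Qed.

Let commg_memW w a : w \in W -> a \in B -> [~ w, a] \in W.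
Proof. by move=> Ww Ba; rewrite groupM ?groupV ?memJ_norm ?(subsetP nWB). Qed.

Let commg2_memZ a b : a \in B -> b \in B -> [~ x, a, b] \in Z.
Proof.
move=> Ba Bb; have: 'C_W(B) \subset Z.
  rewrite subsetI subsetIl (max_rank_cent_sub p_pr maxB) //.
  - exact: subset_trans (subsetIl _ _) sWS.
  - exact: abelemS (subsetIl _ _) abelW.
  exact: subsetIr.
move/subsetP; apply; rewrite inE !commg_memW //.
by apply/centP=> c Bc; apply/commgP; rewrite cubic_x.
Qed.

(* Since [x, B, B] <= C_W(B) <= Z, a |-> [x, a] Z is a morphism from B to W/Z;
   with D the preimage of its image and K its kernel, T = DK has order |B|. *)
Let f a := coset Z [~ x, a].

Let fM : morphic B f.
Proof.
apply/morphicP=> a b Ba Bb; have Wxa := commg_memW Wx Ba; have Wxb := commg_memW Wx Bb.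
have [xaN xbN] := (subsetP nZW _ Wxa, subsetP nZW _ Wxb).
rewrite /f commgMJ conjg_mulR mulgA (centsP cWW _ Wxb _ Wxa).
have Zxab := commg2_memZ Ba Bb; have xabN := subsetP nZW _ (subsetP sZW _ Zxab).
rewrite (coset_morphM (groupM xaN xbN) xabN) (coset_morphM xaN xbN).
by rewrite (coset_id Zxab) mulg1.
Qed.

Let K := ('ker (morphm fM))%G.
Let D := (coset Z @*^-1 (morphm fM @* B))%G.

Let memK a : (a \in K) = (a \in B) && ([~ x, a] \in Z).
Proof.
apply/idP/andP=> [/morphpreP[Ba /set1P fa1] | [Ba Zxa]].
  by split=> //; apply: coset_idr fa1; apply: (subsetP nZW); rewrite commg_memW.
by apply/morphpreP; split=> //; apply/set1P; apply: coset_id.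
Qed.

Let memD d : d \in D -> exists2 a, a \in B & exists2 z, z \in Z & d = z * [~ x, a].
Proof.
rewrite /D => /morphpreP[Nd]; case/morphimP=> a Ba _ fa; exists a => //.
by apply: kercoset_rcoset Nd _ fa; rewrite (subsetP nZW) ?commg_memW.
Qed.

Let commg_memD a : a \in B -> [~ x, a] \in D.
Proof.
move=> Ba; rewrite mem_morphpre ?(subsetP nZW) ?commg_memW //.
by have := mem_morphim (morphm_morphism fM) Ba Ba.
Qed.

Let sZD : Z \subset D. Proof. exact: sub_cosetpre. Qed.

Let sDW : D \subset W.
Proof.
apply/subsetP=> _ /memD[a Ba [z Zz ->]].
by rewrite groupM ?commg_memW // (subsetP sZW).
Qed.

Let cubic_D d b c : d \in D -> b \in B -> c \in B -> [~ d, b, c] = 1.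
Proof.
move=> /memD[a Ba [z Zz ->]] Bb Bc.
have /commgP/eqP zb1 : commute z b := centsP cBB z (subsetP sZB z Zz) b Bb.
by rewrite (commMgJ z) zb1 conj1g mul1g cubic_x.
Qed.

Let sKB : K \subset B. Proof. by apply/subsetP=> a; rewrite memK => /andP[]. Qed.

Let cent_KD : K \subset 'C(D).
Proof.
apply/subsetP=> k; rewrite memK => /andP[Bk Zxk].
apply/centP=> _ /memD[a Ba [z Zz ->]].
apply: commuteM; first exact: centsP cBB k Bk z (subsetP sZB z Zz).
have /commgP/conjg_fixP ak : commute a k := centsP cBB a Ba k Bk.
have /commgP/conjg_fixP xa_xk : commute [~ x, a] [~ x, k].
  exact: centsP cWW _ (commg_memW Wx Ba) _ (commg_memW Wx Bk).
have /commgP/eqP xka1 : commute [~ x, k] a := centsP cBB _ (subsetP sZB _ Zxk) a Ba.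
apply/commute_sym/commgP/conjg_fixP.
by rewrite conjRg ak conjg_mulR (commMgJ x) xa_xk xka1 mulg1.
Qed.

Let T := (D <*> K)%G.

Let TI_DK : D :&: K = Z.
Proof.
apply/eqP; rewrite eqEsubset setISS //= subsetI sZD; apply/subsetP=> z Zz.
have /commgP/eqP xz1 : commute x z := centsP cWW x Wx z (subsetP sZW z Zz).
by rewrite memK (subsetP sZB) // xz1 group1.
Qed.

Let card_T : #|T| = #|B|.
Proof.
have indexDZ : #|D : Z| = #|B : K|.
  by rewrite -card_quotient ?(subset_trans sDW nZW) // cosetpreK card_morphim setIid.
apply/eqP; rewrite -(eqn_pmul2r (cardG_gt0 Z)).
have := mul_cardG D K; rewrite -(cent_joinEr cent_KD) TI_DK => <-.
by rewrite -(Lagrange sZD) -(Lagrange sKB) indexDZ mulnC mulnA mulnAC.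
Qed.

Let meet_W_T : W :&: T = D.
Proof.
have -> : T :=: D * K := cent_joinEr cent_KD.
rewrite setIC -group_modl // mulGSid //.
by apply: subset_trans sZD; rewrite /Z /= setIC setIS.
Qed.

Lemma quadratic_replacement a0 b0 :
    a0 \in B -> b0 \in B -> [~ x, a0, b0] != 1 ->
  exists2 T : {group gT}, T \in 'E_p^('r_p(S))(S) &
    ~~ (T \subset 'C(W)) && (#|W :&: B| < #|W :&: T|).
Proof.
move=> Ba0 Bb0 nt_x.
have abelT : p.-abelem T := abelemY (abelemS sDW abelW) (abelemS sKB abelB) cent_KD.
have sTS : T \subset S by rewrite join_subG (subset_trans sDW) // (subset_trans sKB).
have maxT : T \in 'E_p^('r_p(S))(S).
  by case/pnElemP: maxB => _ _ <-; apply/pnElemP; rewrite card_T.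
exists T => //; apply/andP; split.
  apply: contra nt_x => cWT.
  have sWD : W \subset D.
    by rewrite -meet_W_T subsetIidl (max_rank_cent_sub p_pr maxT) // centsC.
  by rewrite cubic_D ?(subsetP sWD).
rewrite meet_W_T proper_card // properE sZD; apply/subsetPn; exists [~ x, a0].
  exact: commg_memD.
apply: contra nt_x => Zxa; apply/commgP.
exact: centsP cBB _ (subsetP sZB _ Zxa) _ Bb0.
Qed.

End QuadraticReplacement.

Section ThompsonSubgroup.
Variables (gT : finGroupType) (p : nat) (S : {group gT}).
Hypotheses (p_pr : prime p) (pS : p.-group S).
Implicit Types (W Y : {group gT}).

Lemma thompson_subG Y :
  reflect (forall A : {group gT}, A \in 'E_p^('r_p(S))(S) -> A \subset Y)
          (thompson p S \subset Y).
Proof. by rewrite gen_subG; apply: bigcupsP. Qed.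

Lemma thompson_sub : thompson p S \subset S.
Proof. by apply/thompson_subG=> A /pnElemP[]. Qed.

Lemma sub_thompson (A : {group gT}) :
  A \in 'E_p^('r_p(S))(S) -> A \subset thompson p S.
Proof. by move=> EA; apply/sub_gen/(bigcup_max A). Qed.

Lemma max_rank_quadratic W (A : {group gT}) :
    p.-abelem W -> W <| S -> A \in 'E_p^('r_p(S))(S) -> ~~ (A \subset 'C(W)) ->
  exists B : {group gT}, [/\ B \in 'E_p^('r_p(S))(S), ~~ (B \subset 'C(W)) &
    forall w a b, w \in W -> a \in B -> b \in B -> [~ w, a, b] = 1].
Proof.
move=> abelW /andP[sWS nWS] EA not_cWA.
pose P (B : {group gT}) := (B \in 'E_p^('r_p(S))(S)) && ~~ (B \subset 'C(W)).
have PA : P A by rewrite /P EA.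
have [B /andP[EB not_cWB] maxB] := arg_maxnP (fun B : {group gT} => #|W :&: B|) PA.
exists B; split=> // w a b Ww Ba Bb; apply/eqP/idPn=> nt_wab.
have sBS : B \subset S by case/pnElemP: EB.
have [x [a1 [b1 [Wx Ba1 Bb1 nt_x cubic_x]]]] :=
  exists_cubic_commg (pgroup_nil pS) sWS sBS (subset_trans sBS nWS) Ww Ba Bb nt_wab.
have [T ET /andP[not_cWT ltBT]] :=
  quadratic_replacement p_pr abelW sWS nWS EB Wx cubic_x Ba1 Bb1 nt_x.
have leTB : #|W :&: T| <= #|W :&: B| by apply: maxB; rewrite /P ET.
by rewrite ltnNge leTB in ltBT.
Qed.

Lemma thompson_quadratic_elt W Y :
    p.-abelem W -> W <| S -> Y \subset 'C(W) -> ~~ (thompson p S \subset Y) ->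
  exists2 e, e \in thompson p S :\: Y & forall w, w \in W -> [~ w, e, e] = 1.
Proof.
move=> abelW nsWS cWY not_sJY.
have [A EA not_sAY] :
    exists2 A : {group gT}, A \in 'E_p^('r_p(S))(S) & ~~ (A \subset Y).
  apply/exists_inP; apply: contraR not_sJY => /exists_inPn sAY.
  by apply/thompson_subG=> A /sAY/negbNE.
have [cWA | not_cWA] := boolP (A \subset 'C(W)).
  have [e Ae not_Ye] := subsetPn not_sAY.
  exists e; first by rewrite inE not_Ye (subsetP (sub_thompson EA)).
  move=> w Ww; have /commute_sym/commgP/eqP-> := centsP cWA e Ae w Ww.
  exact: comm1g.
have [B [EB not_cWB quadB]] := max_rank_quadratic abelW nsWS EA not_cWA.
have [e Be not_cWe] := subsetPn not_cWB; exists e => [|w Ww]; last exact: quadB.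
rewrite inE (subsetP (sub_thompson EB)) // andbT.
by apply: contra not_cWe; apply/subsetP.
Qed.

End ThompsonSubgroup.

Theorem theorem1p5 (gT : finGroupType) (p : nat) (S X : {group gT}) :
  prime p -> odd p -> p.-group S ->
  is_oliver p S X ->
  (forall L : {group gT},
     X \subset L -> L \subset thompson p S * X -> L <| S) ->
  thompson p S \subset X.
Proof.
move=> p_pr p_odd pS oliverX normalL; apply/idPn=> not_sJX.
have [e /setDP[Je not_Xe] quad_e] := thompson_quadratic_elt p_pr pS
  (abelem_Ohm1_subcent p_pr p_odd pS oliverX) (normal_Ohm1_subcent oliverX)
  (cents_Ohm1_subcent S X) not_sJX.
have Se : e \in S := subsetP (thompson_sub p S) e Je.
have nXe : <[e]> \subset 'N(X).
  by case: oliverX => /andP[_ nXS] _ _; rewrite cycle_subG (subsetP nXS).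
case/negP: not_Xe; apply: (oliver_quadratic_mem p_pr p_odd pS oliverX Se _ quad_e).
apply: normalL; first exact: joing_subl.
by rewrite /= norm_joinEr // -(normC nXe) mulSg ?cycle_subG.
Qed.
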